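(* Let $r\geq 2$ be a fixed integer, let $V$ be a set of $n$ vertices, and let $d=d(n)$ satisfy $d=o(n^{r-1})$. Suppose $H,H'\subseteq\binom{V}{r}$ are two edge-disjoint $r$-graphs on $V$ such that $|H|=o(nd)$ and $\Delta(H')=o(n^{r-1})$. Then, for all $e\in\binom{V}{r}\setminus(H\cup H')$, \[\mathbb{P}\left[e\in G_{n,d}^{(r)}\mid\mathcal{G}_{n,d,H,H'}^{(r)}\right]\leq(r-1)!\frac{d}{n^{r-1}}\left(1+O\left(\frac{1}{n}+\frac{d}{n^{r-1}}+\frac{|H|}{nd}+\frac{\Delta(H')}{n^{r-1}}\right)\right).\]
   Context: An $r$-graph on $V$ is a set of $r$-element subsets (edges) of $V$; $|H|$ is its number of edges, $\deg_H(v)$ the number of edges containing $v$, and $\Delta(H)$ the maximum degree. $\mathcal{G}_{n,d}^{(r)}$ is the set of all $d$-regular $r$-graphs on the $n$-vertex set $V$ (it is assumed throughout that $r\mid nd$), and $G_{n,d}^{(r)}$ is chosen uniformly at random from it. For $r$-graphs $H,H'$ on $V$, $\mathcal{G}_{n,d,H,H'}^{(r)}$ is the set of $G\in\mathcal{G}_{n,d}^{(r)}$ with $H\subseteq G$ and $H'\cap G=\varnothing$; it is also used to denote the event $G_{n,d}^{(r)}\in\mathcal{G}_{n,d,H,H'}^{(r)}$. Asymptotics are as $n\to\infty$; the implicit constant in $O(\cdot)$ depends only on $r$. *)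

From mathcomp Require Import all_boot all_order all_algebra.
Set Implicit Arguments. Unset Strict Implicit. Unset Printing Implicit Defensive.
Import Order.TTheory GRing.Theory Num.Theory.

Definition is_rgraph (r n : nat) (H : {set {set 'I_n}}) : bool :=
  [forall e in H, #|e| == r].

Definition deg (n : nat) (H : {set {set 'I_n}}) (v : 'I_n) : nat :=
  #|[set e in H | v \in e]|.

Definition maxdeg (n : nat) (H : {set {set 'I_n}}) : nat :=
  \max_(v : 'I_n) deg H v.

Definition regular_rgraph (r d n : nat) (G : {set {set 'I_n}}) : bool :=
  is_rgraph r G && [forall v : 'I_n, deg G v == d].

Definition GndHH (r d n : nat) (H H' : {set {set 'I_n}}) : {set {set {set 'I_n}}} :=
  [set G : {set {set 'I_n}} | [&& regular_rgraph r d G, H \subset G & [disjoint H' & G]]].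

(* P[e in G^{(r)}_{n,d} | G^{(r)}_{n,d,H,H'}] for the uniform distribution,
   as a ratio of counts (convention x/0 = 0 if the conditioning event is empty) *)
Definition cond_prob (r d n : nat) (H H' : {set {set 'I_n}}) (e : {set 'I_n}) : rat :=
  (#|[set G in GndHH r d H H' | e \in G]|%:R / #|GndHH r d H H'|%:R)%R.

Definition littleo (f g : nat -> rat) : Prop :=
  forall eps : rat, (0 < eps)%R -> exists N : nat, forall n, (N <= n)%N -> (f n <= eps * g n)%R.

From mathcomp Require Import all_boot all_order all_algebra zify ring lra.
Set Implicit Arguments. Unset Strict Implicit. Unset Printing Implicit Defensive.

(* Switching argument, with r = m.+1.  Order e as v_0, ..., v_m.  For G containing e, put m
   further edges of G, each ordered, as the rows below v of an r x r array.  If these rows are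
   pairwise disjoint edges outside H that miss e, and no column is an edge of G or H', then
   replacing the r rows of the array by its r columns keeps every degree and yields a graph of
   the family that misses e.  All but a fraction
   delta = O(1/n + d/n^m + |H|/(nd) + Delta(H')/n^m) of the (nd m!)^m arrays of ordered edges
   of G are switchable, while a graph without e is reached by at most (d m!)^r switchings,
   since column j is an edge through v_j.  Double counting gives
   P[e in G] / P[e notin G] <= m! d / (n^m (1 - delta)). *)

Lemma card_bigcup_le (T I : finType) (P : pred I) (A : I -> {set T}) :
  #|\bigcup_(i | P i) A i| <= \sum_(i | P i) #|A i|.
Proof.
elim/big_rec2: _ => [|i X s _ leXs]; first by rewrite cards0.
by rewrite (leq_trans (leq_card_setU _ _)) ?leq_add2l.
Qed.

Lemma leq_sum_const (I : finType) (P : pred I) (F : I -> nat) k :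
  (forall i, P i -> F i <= k) -> \sum_(i | P i) F i <= #|P| * k.
Proof. by move=> leFk; rewrite -sum_nat_const leq_sum. Qed.

Section Orderings.
Variable T : finType.

Definition img k (f : {ffun 'I_k -> T}) : {set T} := [set f j | j : 'I_k].

Definition orderings k (K : {set {set T}}) : {set {ffun 'I_k -> T}} :=
  [set f : {ffun 'I_k -> T} | injectiveb f && (img f \in K)].

Lemma card_img k (f : {ffun 'I_k -> T}) : injective f -> #|img f| = k.
Proof. by move=> injf; rewrite card_imset // card_ord. Qed.

Lemma card_orderings1 k (S : {set T}) : #|orderings k [set S]| = (#|S| == k) * k`!.
Proof.
have [cardS|neq_Sk] := eqVneq #|S| k; last first.
  apply/eqP; rewrite mul0n cards_eq0; apply/eqP/setP => f; rewrite !inE.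
  by apply/negbTE/andP => -[/injectiveP/card_img + /eqP fS]; rewrite fS; apply/eqP.
rewrite mul1n -ffactnn -[X in X ^_ _]cardS -[X in _ ^_ X](card_ord k).
rewrite -(card_inj_ffuns_on _ (mem S)); apply: eq_card => f; rewrite !inE.
case injf: (injectiveb f); rewrite ?andbF ?andbT //=.
apply/eqP/ffun_onP => [<- j | fS]; first exact: imset_f.
apply/eqP; rewrite eqEcard card_img ?cardS ?leqnn ?andbT; last exact/injectiveP.
by apply/subsetP => _ /imsetP [j _ ->]; exact: fS.
Qed.

Lemma card_orderings k (K : {set {set T}}) : #|orderings k K| = \sum_(S in K) (#|S| == k) * k`!.
Proof.
rewrite -sum1_card (partition_big (@img k) (mem K)) => [|f]; last by rewrite inE => /andP [].
apply: eq_bigr => S SK; rewrite -card_orderings1 -sum1_card; apply: eq_bigl => f.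
by rewrite !inE; case: eqP => [->|_]; rewrite ?andbF // (SK : S \in K) andbT.
Qed.

Lemma card_orderings_le k (K : {set {set T}}) : #|orderings k K| <= #|K| * k`!.
Proof.
by rewrite card_orderings leq_sum_const // => S _; case: (_ == k); rewrite ?mul1n.
Qed.

Lemma card_orderings_uniform k (K : {set {set T}}) :
  {in K, forall S : {set T}, #|S| = k} -> #|orderings k K| = #|K| * k`!.
Proof.
move=> cardK; rewrite card_orderings -sum_nat_const.
by apply: eq_bigr => S /cardK ->; rewrite eqxx mul1n.
Qed.
End Orderings.

Lemma card_subsingleton (T : finType) (X : {set T}) :
  {in X &, forall x y, x = y} -> #|X| = (X != set0).
Proof.
move=> allXeq; have : #|X| <= 1 by apply/card_le1_eqP => x y xX yX; exact/esym/allXeq.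
by rewrite -cards_eq0; case: #|X| => [|[|]].
Qed.

Lemma disjoint_memP (T : finType) (A B : {set T}) :
  reflect (forall x, x \in A -> x \in B -> False) [disjoint A & B].
Proof.
apply: (iffP pred0P) => [AB0 x xA xB | AB x /=]; first by move: (AB0 x); rewrite /= xA xB.
by apply/negbTE/andP => -[]; exact: AB.
Qed.

Definition box (I U : finType) (X : I -> {set U}) : {set {ffun I -> U}} :=
  [set c : {ffun I -> U} | [forall i, c i \in X i]].

Lemma card_box (I U : finType) (X : I -> {set U}) : #|box X| = \prod_i #|X i|.
Proof. by rewrite -cardsXn; apply: eq_card => c; rewrite !inE. Qed.

Lemma leq_prod_but1 (I : finType) (a : I -> nat) i p :
  (forall k, k != i -> a k <= p) -> \prod_k a k <= a i * p ^ #|I|.-1.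
Proof.
move=> le_ap; rewrite (bigD1 i) //= leq_mul2l -(cardC1 i) -prod_nat_const.
by rewrite (eq_bigl (fun k => k != i)) ?leq_prod ?orbT // => k; rewrite !inE.
Qed.

Lemma leq_prod_but2 (I : finType) (a : I -> nat) i i' p : i != i' ->
  (forall k, k != i -> k != i' -> a k <= p) -> \prod_k a k <= a i * a i' * p ^ (#|I| - 2).
Proof.
move=> neq_ii' le_ap; rewrite (bigD1 i) // (bigD1 i') /=; last by rewrite eq_sym.
rewrite mulnA leq_mul2l; apply/orP; right.
have -> : (#|I| - 2 = #|[pred k | (k != i) && (k != i')]|)%N.
  rewrite subn2 -(cardC1 i) (cardD1 i') !inE eq_sym neq_ii' add1n /=.
  by apply: eq_card => k; rewrite !inE andbC.
rewrite -prod_nat_const (eq_bigl (fun k => (k != i) && (k != i'))) //.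
by apply: leq_prod => k /andP []; exact: le_ap.
Qed.

Lemma sum_card_exchange (T1 T2 : finType) (X : {set T1}) (P : T1 -> T2 -> bool) :
  \sum_(x in X) #|[set y | P x y]| = \sum_y #|[set x in X | P x y]|.
Proof.
under eq_bigr do rewrite -sum1_card big_mkcond /=.
under [RHS]eq_bigr do rewrite -sum1_card big_mkcond /=.
rewrite exchange_big /=; apply: eq_bigr => y _; rewrite big_mkcond /=.
by apply: eq_bigr => x _; rewrite !inE; case: (x \in X); case: (P x y).
Qed.

Section Degrees.
Variable n : nat.
Implicit Types G X Y : {set {set 'I_n}}.

Lemma sum_deg G : \sum_w deg G w = \sum_(S in G) #|S|.
Proof.
under eq_bigr do rewrite /deg -sum1_card big_mkcond /=.
rewrite exchange_big /= [RHS]big_mkcond /=; apply: eq_bigr => S _.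
under eq_bigr do rewrite inE.
case: (S \in G) => /=; last by rewrite big1.
by rewrite -sum1_card [RHS]big_mkcond.
Qed.

Lemma card_regular_rgraph r d G : regular_rgraph r d G -> #|G| * r = n * d.
Proof.
case/andP => /forallP cardG /forallP degG.
have : \sum_(w : 'I_n) d = \sum_(S in G) r.
  rewrite -(eq_bigr _ (fun w _ => eqP (degG w))) sum_deg.
  by apply: eq_bigr => S SG; move: (cardG S); rewrite SG => /eqP.
by rewrite !sum_nat_const card_ord mulnC => ->.
Qed.

Lemma degU X Y w : [disjoint X & Y] -> deg (X :|: Y) w = deg X w + deg Y w.
Proof.
move=> XY; rewrite /deg -cardsUI.
have /disjoint_setI0 -> : [disjoint [set e in X | w \in e] & [set e in Y | w \in e]].
  apply/disjoint_memP => S; rewrite !inE => /andP [SX _] /andP [SY _].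
  by rewrite (disjointFr XY SX) in SY.
by rewrite cards0 addn0; apply: eq_card => S; rewrite !inE andb_orl.
Qed.

End Degrees.

Section Switching.
Variables (n m d : nat) (H H' : {set {set 'I_n}}) (e : {set 'I_n}).
Variable v : {ffun 'I_m.+1 -> 'I_n}.
Hypothesis v_inj : injective v.
Hypothesis img_v : img v = e.
Hypothesis eNH : e \notin H.

Local Notation array := {ffun 'I_m -> {ffun 'I_m.+1 -> 'I_n}}.
Implicit Types (G : {set {set 'I_n}}) (c : array).

(* The array of c is v on top of the rows c 0, ..., c (m - 1). *)
Definition row c i := img (c i).
Definition column c j := v j |: [set c i j | i : 'I_m].
Definition removed c := e |: [set row c i | i : 'I_m].
Definition added c := [set column c j | j : 'I_m.+1].
Definition switch G c := (G :\: removed c) :|: added c.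

Definition switchable G c :=
  [&& [forall i, [&& c i \in orderings m.+1 G, row c i \notin H & [disjoint row c i & e]]],
      [forall i, forall i', (i != i') ==> [disjoint row c i & row c i']] &
      [forall j, column c j \notin G :|: H']].

(* Below v j, column j of a switchable array is an ordered edge of the switched graph through
   v j with v j removed; these choices determine the array. *)
Definition col c j : {ffun 'I_m -> 'I_n} := [ffun i => c i j].

Definition column_choices G j :=
  [set f : {ffun 'I_m -> 'I_n} | [&& injectiveb f, v j \notin img f & v j |: img f \in G]].

Definition preimages G := [set c | [forall j, col c j \in column_choices G j]].

Lemma v_in_e j : v j \in e.
Proof. by rewrite -img_v imset_f. Qed.

Lemma mem_row c i j : c i j \in row c i.
Proof. exact: imset_f. Qed.

Lemma mem_column c w j : (w \in column c j) = (w == v j) || [exists i, w == c i j].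
Proof.
rewrite !inE; congr (_ || _).
by apply/imsetP/existsP => [[i _ ->]|[i /eqP ->]]; exists i.
Qed.

Section SwitchOf.
Variables (G : {set {set 'I_n}}) (c : array).
Hypotheses (GinF : G \in GndHH m.+1 d H H') (eG : e \in G) (sw_c : switchable G c).

Let sw_rows i : [&& c i \in orderings m.+1 G, row c i \notin H & [disjoint row c i & e]].
Proof. by case/and3P: sw_c => /forallP. Qed.

Let sw_pairs i i' : i != i' -> [disjoint row c i & row c i'].
Proof. by case/and3P: sw_c => _ /forallP /(_ i) /forallP /(_ i') /implyP. Qed.

Let sw_columns j : column c j \notin G :|: H'.
Proof. by case/and3P: sw_c => _ _ /forallP. Qed.

Lemma row_in_G i : row c i \in G.
Proof. by case/and3P: (sw_rows i); rewrite inE => /andP []. Qed.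

Lemma row_inj i : injective (c i).
Proof. by case/and3P: (sw_rows i); rewrite inE => /andP [/injectiveP]. Qed.

Lemma entry_notin_e i j : c i j \notin e.
Proof. by case/and3P: (sw_rows i) => _ _ /disjointFr ->; rewrite ?mem_row. Qed.

Lemma entry_inj i j i' j' : c i j = c i' j' -> i = i' /\ j = j'.
Proof.
move=> cij; have [eq_ii'|neq_ii'] := eqVneq i i'.
  by subst i'; split=> //; exact: (row_inj cij).
by move: (disjointFr (sw_pairs neq_ii') (mem_row c i j)); rewrite cij mem_row.
Qed.

Lemma removed_sub : removed c \subset G.
Proof.
by apply/subsetP => S; rewrite !inE => /orP [/eqP -> //|/imsetP [i _ ->]]; exact: row_in_G.
Qed.

Lemma added_disjoint : [disjoint added c & G].
Proof.
apply/disjoint_memP => _ /imsetP [j _ ->].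
by move: (sw_columns j); rewrite inE negb_or => /andP [/negbTE ->].
Qed.

Let covered w := (w \in e) || [exists i, w \in row c i].

Lemma deg_removed w : deg (removed c) w = covered w.
Proof.
rewrite /deg card_subsingleton.
  congr (nat_of_bool _); apply/set0Pn/orP => [[S]|].
    rewrite !inE => /andP [/orP [/eqP ->|/imsetP [i _ ->]] wS]; first by left.
    by right; apply/existsP; exists i.
  case=> [we|/existsP [i wi]]; first by exists e; rewrite !inE eqxx.
  by exists (row c i); rewrite !inE wi andbT imset_f ?orbT.
have row_or_e S : S \in removed c -> S = e \/ exists i, S = row c i.
  by rewrite !inE => /orP [/eqP ->|/imsetP [i _ ->]]; [left|right; exists i].
move=> S1 S2 /setIdP [/row_or_e S1R w1] /setIdP [/row_or_e S2R w2].
case: S1R S2R => [?|[i ?]] [?|[i' ?]]; subst S1 S2 => //.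
- by case/and3P: (sw_rows i') => _ _ /disjointFr/(_ w2); rewrite w1.
- by case/and3P: (sw_rows i) => _ _ /disjointFr/(_ w1); rewrite w2.
have [-> //|neq_ii'] := eqVneq i i'.
by move: (disjointFr (sw_pairs neq_ii') w1); rewrite w2.
Qed.

Lemma deg_added w : deg (added c) w = covered w.
Proof.
rewrite /deg card_subsingleton.
  congr (nat_of_bool _); apply/set0Pn/orP => [[S]|].
    rewrite !inE => /andP [/imsetP [j _ ->]].
    rewrite mem_column => /orP [/eqP ->|/existsP [i /eqP ->]]; first by left; exact: v_in_e.
    by right; apply/existsP; exists i; exact: mem_row.
  case=> [|/existsP [i /imsetP [j _ ->]]].
    rewrite -img_v => /imsetP [j _ ->].
    by exists (column c j); rewrite inE mem_column eqxx andbT imset_f.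
  exists (column c j); rewrite inE mem_column imset_f //=.
  by apply/orP; right; apply/existsP; exists i.
move=> S1 S2; rewrite !inE => /andP [/imsetP [j1 _ ->] w1] /andP [/imsetP [j2 _ ->] w2].
congr (column c _); move: w1 w2; rewrite !mem_column.
case/orP => [/eqP ->|/existsP [i1 /eqP ->]]; case/orP => [/eqP|/existsP [i2 /eqP]].
- exact: v_inj.
- by move=> vc; move: (entry_notin_e i2 j2); rewrite -vc v_in_e.
- by move=> cv; move: (entry_notin_e i1 j1); rewrite cv v_in_e.
by case/entry_inj.
Qed.

Lemma card_column j : #|column c j| = m.+1.
Proof.
rewrite cardsU1 card_imset => [|i i' /entry_inj []//].
rewrite card_ord; case: imsetP => [[i _ vc]|_ //].
by move: (entry_notin_e i j); rewrite -vc v_in_e.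
Qed.

Lemma setD_removedK : (G :\: removed c) :|: removed c = G.
Proof. by rewrite -[RHS](setID G (removed c)) (setIidPr removed_sub) setUC. Qed.

Lemma setD_removed_disjoint_added : [disjoint G :\: removed c & added c].
Proof.
apply/disjoint_memP => S; rewrite inE => /andP [_ SG] SA.
by rewrite (disjointFr added_disjoint SA) in SG.
Qed.

Lemma deg_switch w : deg (switch G c) w = deg G w.
Proof.
have removed_disjoint : [disjoint G :\: removed c & removed c].
  by apply/disjoint_memP => S; rewrite inE => /andP [/negbTE ->].
rewrite /switch degU ?setD_removed_disjoint_added //.
by rewrite -[in RHS]setD_removedK degU // deg_removed deg_added.
Qed.

Lemma switch_in_family : switch G c \in GndHH m.+1 d H H'.
Proof.
move: GinF; rewrite !inE => /and3P [/andP [/forallP cardG /forallP degG] HG H'G].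
apply/and3P; split; first (apply/andP; split).
- apply/forallP => S; apply/implyP; rewrite !inE => /orP [/andP [_ SG]|/imsetP [j _ ->]].
    by move: (cardG S); rewrite SG.
  by rewrite card_column.
- by apply/forallP => w; rewrite deg_switch.
- apply/subsetP => S SH; rewrite !inE (subsetP HG S SH) andbT; apply/orP; left.
  apply/negP => /orP [/eqP SE|/imsetP [i _ SE]]; first by move: eNH; rewrite -SE SH.
  by case/and3P: (sw_rows i); rewrite -SE SH.
- apply/disjoint_memP => S SH'; rewrite !inE => /orP [/andP [_ SG]|/imsetP [j _ SE]].
    by rewrite (disjointFr H'G SH') in SG.
  by move: (sw_columns j); rewrite -SE !inE SH' orbT.
Qed.

Lemma e_notin_switch : e \notin switch G c.
Proof. by rewrite !inE eqxx /= (disjointFl added_disjoint eG). Qed.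

Lemma switchK : (switch G c :\: added c) :|: removed c = G.
Proof.
rewrite /switch setDUl setDv setU0.
by move/setDidPl: setD_removed_disjoint_added ->; rewrite setD_removedK.
Qed.

Lemma switch_preimage : c \in preimages (switch G c).
Proof.
rewrite inE; apply/forallP => j; have img_col : img (col c j) = [set c i j | i : 'I_m].
  by apply/setP => w; apply/imsetP/imsetP => -[i _ ->]; exists i; rewrite ?ffunE.
rewrite !inE img_col; apply/and3P; split.
- by apply/injectiveP => i i'; rewrite !ffunE => /entry_inj [].
- by apply/imsetP => -[i _ vc]; move: (entry_notin_e i j); rewrite -vc v_in_e.
- by rewrite (imset_f (column c)) ?orbT.
Qed.

End SwitchOf.

Lemma card_column_choices G j : #|column_choices G j| <= deg G (v j) * m`!.
Proof.
set K := [set S :\ v j | S in [set S in G | v j \in S]].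
apply: leq_trans (_ : #|orderings m K| <= _); last first.
  by rewrite (leq_trans (card_orderings_le _ _)) // leq_mul2r leq_imset_card orbT.
apply: subset_leq_card; apply/subsetP => f; rewrite !inE => /and3P [-> vf fG] /=.
apply/imsetP; exists (v j |: img f); first by rewrite inE fG setU11.
by rewrite setU1K.
Qed.

Lemma card_preimages G : regular_rgraph m.+1 d G -> #|preimages G| <= (d * m`!) ^ m.+1.
Proof.
case/andP => _ /forallP degG.
pose transpose c : {ffun 'I_m.+1 -> {ffun 'I_m -> 'I_n}} := [ffun j => col c j].
have transpose_inj : injective transpose.
  move=> c1 c2 /ffunP eq_c; apply/ffunP => i; apply/ffunP => j.
  by move: (eq_c j); rewrite !ffunE => /ffunP /(_ i); rewrite !ffunE.
rewrite -(card_imset _ transpose_inj).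
apply: leq_trans (_ : #|box (column_choices G)| <= _).
  apply/subset_leq_card/subsetP => t /imsetP [c]; rewrite inE => /forallP c_pre ->.
  by rewrite inE; apply/forallP => j; rewrite ffunE c_pre.
rewrite card_box -[X in _ ^ X](card_ord m.+1) -prod_nat_const leq_prod // => j _.
by rewrite (leq_trans (card_column_choices G j)) // (eqP (degG _)).
Qed.

Local Notation with_e := [set G in GndHH m.+1 d H H' | e \in G].
Local Notation without_e := [set G in GndHH m.+1 d H H' | e \notin G].

Lemma sum_card_switchable_le :
  \sum_(G in with_e) #|[set c | switchable G c]| <= #|without_e| * (d * m`!) ^ m.+1.
Proof.
rewrite sum_card_exchange.
apply: leq_trans (_ : \sum_c #|[set G' in without_e | c \in preimages G']| <= _).
  apply: leq_sum => c _.
  rewrite -(@card_in_imset _ _ (switch^~ c) [set G in with_e | switchable G c]); last first.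
    move=> G1 G2 /setIdP [/setIdP [_ eG1] sw1] /setIdP [/setIdP [_ eG2] sw2] eq_sw.
    by rewrite -(switchK eG1 sw1) -(switchK eG2 sw2) eq_sw.
  apply/subset_leq_card/subsetP => _ /imsetP [G /setIdP [/setIdP [GinF eG] sw_c] ->].
  apply/setIdP; split; first (apply/setIdP; split).
  - exact: switch_in_family.
  - exact: e_notin_switch.
  - exact: switch_preimage.
rewrite -(sum_card_exchange without_e (fun G' c => c \in preimages G')) -sum_nat_const.
apply: leq_sum => G'; rewrite !inE => /andP [/and3P [regG' _ _] _].
rewrite (leq_trans _ (card_preimages regG')) // subset_leq_card //.
by apply/subsetP => c; rewrite inE.
Qed.

Definition bad_rows :=
  m * ((#|H| * (m.+1)`! + m.+1 * (d * (m.+1)`!)) * (n * d * m`!) ^ m.-1).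
Definition bad_pairs := m * (m.-1 * (n * ((d * (m.+1)`!) ^ 2 * (n * d * m`!) ^ (m - 2)))).
Definition bad_columns := m.+1 * ((d + maxdeg H') * (m.+1 * (d * (m.+1)`!)) ^ m).

Section Forward.
Variable G : {set {set 'I_n}}.
Hypothesis GinF : G \in GndHH m.+1 d H H'.

Local Notation R := (orderings m.+1 G).
Local Notation arrays := (box (fun _ : 'I_m => R)).

Let G_regular : regular_rgraph m.+1 d G.
Proof. by move: GinF; rewrite inE => /and3P []. Qed.

Lemma card_ordered_edges : #|R| = n * d * m`!.
Proof.
case/andP: G_regular => /forallP cardG _.
rewrite card_orderings_uniform => [|S SG]; last by apply/eqP; move: (cardG S); rewrite SG.
by rewrite factS mulnA (card_regular_rgraph G_regular).
Qed.

Lemma card_arrays : #|arrays| = (n * d * m`!) ^ m.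
Proof. by rewrite card_box card_ordered_edges prod_nat_const card_ord. Qed.

Definition through w := [set f in R | w \in img f].

Lemma card_through w : #|through w| <= d * (m.+1)`!.
Proof.
case/andP: G_regular => _ /forallP degG; rewrite -(eqP (degG w)).
apply: leq_trans (card_orderings_le _ [set S in G | w \in S]).
by apply/subset_leq_card/subsetP => f; rewrite !inE => /andP [/andP [-> ->] ->].
Qed.

Lemma card_meeting (S : {set 'I_n}) : #|S| <= m.+1 ->
  #|[set f in R | ~~ [disjoint img f & S]]| <= m.+1 * (d * (m.+1)`!).
Proof.
move=> cardS; apply: leq_trans (_ : #|\bigcup_(w in S) through w| <= _).
  apply/subset_leq_card/subsetP => f; rewrite inE => /andP [fR /pred0Pn [w /andP [wf wS]]].
  by apply/bigcupP; exists w; [exact: wS | rewrite inE fR; exact: wf].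
apply: leq_trans (card_bigcup_le _ _) _.
by rewrite (leq_trans (leq_sum_const (fun w _ => card_through w))) // leq_mul2r cardS orbT.
Qed.

Definition bad_row i := [set c in arrays | (row c i \in H) || ~~ [disjoint row c i & e]].
Definition bad_pair i i' := [set c in arrays | ~~ [disjoint row c i & row c i']].
Definition bad_column j := [set c in arrays | column c j \in G :|: H'].

Lemma card_bad_row i :
  #|bad_row i| <= (#|H| * (m.+1)`! + m.+1 * (d * (m.+1)`!)) * (n * d * m`!) ^ m.-1.
Proof.
pose Y := orderings m.+1 H :|: [set f in R | ~~ [disjoint img f & e]].
apply: leq_trans (_ : #|box (fun k => if k == i then Y else R)| <= _).
  apply/subset_leq_card/subsetP => c; rewrite !inE => /andP [/forallP cR c_bad].
  apply/forallP => k; case: eqP => [->|_]; last exact: cR.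
  move: (cR i); rewrite !inE => /andP [-> cG] /=.
  by case/orP: c_bad => [->//|->]; rewrite cG orbT.
rewrite card_box; apply: leq_trans (leq_prod_but1 (i := i) (p := n * d * m`!) _) _.
  by move=> k /negbTE ->; rewrite card_ordered_edges.
rewrite eqxx card_ord leq_mul2r (leq_trans (leq_card_setU _ _)) ?orbT //.
by rewrite leq_add ?card_orderings_le ?card_meeting // -(card_img v_inj) img_v.
Qed.

Lemma card_bad_pair i i' : i != i' ->
  #|bad_pair i i'| <= n * ((d * (m.+1)`!) ^ 2 * (n * d * m`!) ^ (m - 2)).
Proof.
move=> neq_ii'.
pose X w := box (fun k => if (k == i) || (k == i') then through w else R).
apply: leq_trans (_ : #|\bigcup_w X w| <= _).
  apply/subset_leq_card/subsetP => c; rewrite !inE => /andP [/forallP cR].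
  case/pred0Pn => w /andP [wi wi']; apply/bigcupP; exists w => //.
  rewrite /X inE; apply/forallP => k.
  case: (eqVneq k i) => [->|_] /=; first by rewrite inE cR.
  by case: (eqVneq k i') => [->|_] /=; [rewrite inE cR | exact: cR].
apply: leq_trans (card_bigcup_le _ _) _; rewrite -[n in n * _]card_ord.
apply: leq_sum_const => w _; rewrite card_box.
apply: leq_trans (leq_prod_but2 neq_ii' (p := n * d * m`!) _) _.
  by move=> k /negbTE -> /negbTE ->; rewrite card_ordered_edges.
by rewrite !eqxx orbT card_ord leq_mul2r expnS expn1 leq_mul ?card_through ?orbT.
Qed.

Lemma card_bad_column j : #|bad_column j| <= (d + maxdeg H') * (m.+1 * (d * (m.+1)`!)) ^ m.
Proof.
pose K := [set S in G :|: H' | (v j \in S) && (#|S| <= m.+1)].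
pose X (S : {set 'I_n}) := box (fun _ : 'I_m => [set f in R | ~~ [disjoint img f & S]]).
apply: leq_trans (_ : #|\bigcup_(S in K) X S| <= _).
  apply/subset_leq_card/subsetP => c; rewrite !inE => /andP [/forallP cR cGH'].
  apply/bigcupP; exists (column c j).
    rewrite inE in_setU cGH' setU11 cardsU1 [X in _ <= X](_ : _ = 1 + m) // leq_add ?leq_b1 //.
    by rewrite (leq_trans (leq_imset_card _ _)) ?card_ord.
  rewrite /X inE; apply/forallP => i; rewrite inE cR /=.
  by apply/pred0Pn; exists (c i j); rewrite /= mem_row !inE (imset_f (fun i => c i j)) ?orbT.
have cardK : #|K| <= d + maxdeg H'.
  apply: leq_trans (_ : #|[set S in G | v j \in S] :|: [set S in H' | v j \in S]| <= _).
    apply/subset_leq_card/subsetP => S; rewrite !inE.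
    by case/andP => /orP [] -> /andP [-> _]; rewrite ?orbT.
  rewrite (leq_trans (leq_card_setU _ _)) // leq_add //.
    by case/andP: G_regular => _ /forallP degG; exact: eq_leq (eqP (degG (v j))).
  by have := @leq_bigmax _ (fun w => deg H' w) (v j).
apply: leq_trans (card_bigcup_le _ _) _.
rewrite (leq_trans (leq_sum_const (k := (m.+1 * (d * (m.+1)`!)) ^ m) _)) ?leq_mul2r ?cardK ?orbT //.
move=> S; rewrite inE => /andP [_ /andP [_ cardS]].
rewrite card_box -[X in _ ^ X](card_ord m) -prod_nat_const leq_prod // => i _.
exact: card_meeting.
Qed.

Definition bad_arrays := (\bigcup_i bad_row i) :|:
  (\bigcup_i \bigcup_(i' | i' != i) bad_pair i i') :|: \bigcup_j bad_column j.

Lemma card_bad_arrays : #|bad_arrays| <= bad_rows + bad_pairs + bad_columns.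
Proof.
have le_rows : #|\bigcup_i bad_row i| <= bad_rows.
  apply: leq_trans (card_bigcup_le _ _) _; rewrite /bad_rows -[m in m * _]card_ord.
  by apply: leq_sum_const => i _; exact: card_bad_row.
have le_pairs : #|\bigcup_i \bigcup_(i' | i' != i) bad_pair i i'| <= bad_pairs.
  apply: leq_trans (card_bigcup_le _ _) _; rewrite /bad_pairs -[m in m * _]card_ord.
  apply: leq_sum_const => i _; apply: leq_trans (card_bigcup_le _ _) _.
  rewrite -[m in m.-1]card_ord -(cardC1 i); apply: leq_sum_const => i' neq_i'i.
  by rewrite card_bad_pair // eq_sym.
have le_columns : #|\bigcup_j bad_column j| <= bad_columns.
  apply: leq_trans (card_bigcup_le _ _) _; rewrite /bad_columns -[X in X * _](card_ord m.+1).
  by apply: leq_sum_const => j _; exact: card_bad_column.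
apply: leq_trans (leq_card_setU _ _) _; rewrite leq_add //.
by apply: leq_trans (leq_card_setU _ _) _; rewrite leq_add.
Qed.

Lemma switchable_of_not_bad c : c \in arrays -> c \notin bad_arrays -> switchable G c.
Proof.
rewrite inE => /forallP cR; rewrite !in_setU !negb_or.
case/andP => /andP [rows_ok pairs_ok] columns_ok.
apply/and3P; split; apply/forallP => i.
- rewrite cR /=; apply: contraNT rows_ok; rewrite negb_and negbK => bad.
  by apply/bigcupP; exists i; rewrite // inE bad andbT inE; exact/forallP.
- apply/forallP => i'; apply/implyP => neq_ii'; apply: contraNT pairs_ok => bad.
  apply/bigcupP; exists i => //; apply/bigcupP; exists i'; first by rewrite eq_sym.
  by rewrite inE bad andbT inE; exact/forallP.
- apply: contraNN columns_ok => bad.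
  by apply/bigcupP; exists i; rewrite // inE bad andbT inE; exact/forallP.
Qed.

Lemma card_switchable_ge :
  (n * d * m`!) ^ m <= #|[set c | switchable G c]| + (bad_rows + bad_pairs + bad_columns).
Proof.
rewrite -card_arrays; apply: (leq_trans _ (leq_add (leqnn _) card_bad_arrays)).
apply: (leq_trans _ (leq_card_setU _ _)); apply/subset_leq_card/subsetP => c cA.
have [bad|not_bad] := boolP (c \in bad_arrays); first by rewrite in_setU bad orbT.
by rewrite in_setU inE switchable_of_not_bad.
Qed.

End Forward.
End Switching.

Lemma exists_ordering n m (e : {set 'I_n}) : #|e| = m.+1 ->
  exists2 v : {ffun 'I_m.+1 -> 'I_n}, injective v & img v = e.
Proof.
move=> card_e; pose v := [ffun j => enum_val (cast_ord (esym card_e) j)].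
have v_inj : injective v by move=> j1 j2; rewrite !ffunE => /enum_val_inj /cast_ord_inj.
exists v => //; apply/eqP; rewrite eqEcard card_img // card_e leqnn andbT.
by apply/subsetP => _ /imsetP [j _ ->]; rewrite ffunE enum_valP.
Qed.

Lemma switching_inequality n m d (H H' : {set {set 'I_n}}) (e : {set 'I_n}) :
  #|e| = m.+1 -> e \notin H ->
  #|[set G in GndHH m.+1 d H H' | e \in G]| * (n * d * m`!) ^ m <=
  #|[set G in GndHH m.+1 d H H' | e \notin G]| * (d * m`!) ^ m.+1 +
  #|[set G in GndHH m.+1 d H H' | e \in G]| *
    (bad_rows m d H + bad_pairs n m d + bad_columns m d H').
Proof.
case/exists_ordering => v v_inj img_v eNH; rewrite -sum_nat_const.
set bad := bad_rows m d H + _ + _; set with_e := [set G in GndHH m.+1 d H H' | e \in G].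
apply: (@leq_trans (\sum_(G in with_e) (#|[set c | switchable H H' e v G c]| + bad))).
  by apply: leq_sum => G /setIdP [GinF _]; exact: card_switchable_ge.
by rewrite big_split /= sum_nat_const leq_add2r sum_card_switchable_le.
Qed.

(* The sum of the coefficients in natr_bad_rows, natr_bad_pairs and natr_bad_columns. *)
Definition switching_const m :=
  m * m.+1 + (m * m.+1 ^ 2 + m * m.-1 * m.+1 ^ 2) + m.+1 ^ (2 * m + 1).

Import Order.TTheory GRing.Theory Num.Theory.
Local Open Scope ring_scope.

Section BadRatios.
Variables (R : numFieldType) (n m d : nat).
Hypotheses (n_gt0 : (0 < n)%N) (d_gt0 : (0 < d)%N).

Local Notation P := (((n * d * m`!) ^ m)%N%:R : R).

Let n_neq0 : n%:R != 0 :> R. Proof. by rewrite pnatr_eq0 -lt0n. Qed.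
Let d_neq0 : d%:R != 0 :> R. Proof. by rewrite pnatr_eq0 -lt0n. Qed.

Lemma natr_bad_rows (H : {set {set 'I_n}}) : (0 < m)%N ->
  (bad_rows m d H)%:R =
    P * (m%:R * m.+1%:R * (#|H|%:R / (n * d)%N%:R) + m%:R * m.+1%:R ^+ 2 / n%:R).
Proof.
case: m => // m' _; rewrite /bad_rows /= expnSr [(m'.+2)`!]factS.
set Q := (_ ^ m')%N; rewrite !(natrM, natrD, natrX); field.
by rewrite n_neq0 d_neq0.
Qed.

Lemma natr_bad_pairs : (bad_pairs n m d)%:R = P * (m%:R * m.-1%:R * m.+1%:R ^+ 2 / n%:R).
Proof.
case: m => [|[|m']]; rewrite /bad_pairs /= ?(mul0n, muln0, mul0r, mulr0) //.
rewrite subn2 /= !expnSr [(m'.+3)`!]factS; set Q := (_ ^ m')%N.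
by rewrite !(natrM, natrX); field.
Qed.

Lemma natr_bad_columns (H' : {set {set 'I_n}}) :
  (bad_columns m d H')%:R =
    P * (m.+1%:R ^+ (2 * m + 1) * ((d%:R + (maxdeg H')%:R) / n%:R ^+ m)).
Proof.
have nm_neq0 : n%:R ^+ m != 0 :> R by rewrite expf_neq0.
rewrite /bad_columns [(m.+1)`!]factS !expnMn !(natrM, natrX, natrD).
by rewrite exprD expr1 mul2n -addnn exprD; field.
Qed.

Lemma natr_preimages_bound :
  ((d * m`!) ^ m.+1)%N%:R = P * (m`!%:R * (d%:R / n%:R ^+ m)).
Proof.
have nm_neq0 : n%:R ^+ m != 0 :> R by rewrite expf_neq0.
by rewrite !(natrX, natrM) exprS !exprMn; field.
Qed.

End BadRatios.

Definition error_term (R : numFieldType) m d n (H H' : {set {set 'I_n}}) : R :=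
  1 / n%:R + d%:R / n%:R ^+ m + #|H|%:R / (n * d)%N%:R + (maxdeg H')%:R / n%:R ^+ m.

Lemma error_term_ge0 (R : numFieldType) m d n (H H' : {set {set 'I_n}}) :
  0 <= error_term R m d H H'.
Proof. by rewrite /error_term !addr_ge0 ?divr_ge0 ?exprn_ge0 ?ler01. Qed.

Lemma natr_bad_le (R : realFieldType) n m d (H H' : {set {set 'I_n}}) :
  (0 < n)%N -> (0 < d)%N -> (0 < m)%N ->
  (bad_rows m d H + bad_pairs n m d + bad_columns m d H')%:R <=
    ((n * d * m`!) ^ m)%N%:R * ((switching_const m)%:R * error_term R m d H H').
Proof.
move=> n_gt0 d_gt0 m_gt0.
rewrite 2!natrD natr_bad_rows // natr_bad_pairs // natr_bad_columns // -!mulrDr ler_wpM2l //.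
rewrite /error_term /switching_const !(natrD, natrM, natrX) mulrDl.
set x : R := #|H|%:R / _; set y : R := 1 / n%:R.
set z : R := d%:R / _; set w : R := (maxdeg H')%:R / _.
have divE t : t / n%:R = t * y by rewrite /y mul1r.
rewrite !divE.
have [x0 y0 z0 w0] : [/\ 0 <= x, 0 <= y, 0 <= z & 0 <= w].
  by split; apply: divr_ge0; rewrite ?ler01 ?ler0n ?exprn_ge0 ?mulr_ge0.
have [a0 b0 b1 c0] : [/\ 0 <= m%:R * m.+1%:R :> R, 0 <= m%:R * m.+1%:R ^+ 2 :> R,
    0 <= m%:R * m.-1%:R * m.+1%:R ^+ 2 :> R & 0 <= m.+1%:R ^+ (2 * m + 1) :> R].
  by split; rewrite ?mulr_ge0 ?exprn_ge0.
nra.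
Qed.

Lemma ratio_le (R : realFieldType) (A B P q delta : R) :
  0 <= A -> 0 <= B -> 0 < P -> 0 <= q -> 0 <= delta -> delta <= 1 / 2 ->
  A * P <= B * (P * q) + A * (P * delta) -> A / (A + B) <= q * (1 + 2 * delta).
Proof.
move=> A0 B0 P0 q0 delta0 delta_small le_AP.
have le_A : A * (1 - delta) <= B * q by rewrite -(ler_pM2l P0); nra.
have [AB0|AB_neq0] := eqVneq (A + B) 0; first by rewrite AB0 invr0 mulr0 mulr_ge0 //; lra.
have AB_gt0 : 0 < A + B by rewrite lt_def AB_neq0 addr_ge0.
rewrite ler_pdivrMr //.
have : A * (1 - delta) * (1 + 2 * delta) <= B * q * (1 + 2 * delta) by rewrite ler_wpM2r //; lra.
have : 0 <= A * (delta * (1 - 2 * delta)) by rewrite !mulr_ge0 //; lra.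
have : 0 <= A * (q * (1 + 2 * delta)) by rewrite !mulr_ge0 //; lra.
nra.
Qed.

Lemma cond_prob_le n m d (H H' : {set {set 'I_n}}) (e : {set 'I_n}) :
  (0 < n)%N -> (0 < d)%N -> (0 < m)%N -> #|e| = m.+1 -> e \notin H ->
  (switching_const m)%:R * error_term rat m d H H' <= 1 / 2 ->
  cond_prob m.+1 d H H' e <=
    m`!%:R * (d%:R / n%:R ^+ m) * (1 + 2 * (switching_const m)%:R * error_term rat m d H H').
Proof.
move=> n_gt0 d_gt0 m_gt0 card_e eNH small.
set with_e := [set G in GndHH m.+1 d H H' | e \in G].
set without_e := [set G in GndHH m.+1 d H H' | e \notin G].
have card_F : #|GndHH m.+1 d H H'| = (#|with_e| + #|without_e|)%N.
  rewrite -(cardsID [set G : {set {set 'I_n}} | e \in G]).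
  by congr (_ + _); apply: eq_card => G; rewrite !inE andbC.
rewrite /cond_prob card_F natrD -[2 * _ * _]mulrA.
apply: (ratio_le (P := ((n * d * m`!) ^ m)%N%:R)) => //.
- by rewrite ltr0n expn_gt0 !muln_gt0 n_gt0 d_gt0 fact_gt0.
- by rewrite mulr_ge0 ?divr_ge0 ?exprn_ge0.
- by rewrite mulr_ge0 ?error_term_ge0.
rewrite -natr_preimages_bound //.
apply: le_trans (_ : _ <= #|without_e|%:R * ((d * m`!) ^ m.+1)%N%:R +
  #|with_e|%:R * (bad_rows m d H + bad_pairs n m d + bad_columns m d H')%:R) _.
  by rewrite -!natrM -natrD ler_nat switching_inequality.
by rewrite lerD2l ler_wpM2l ?natr_bad_le.
Qed.

Theorem lemma2p1 (r : nat) : (2 <= r)%N ->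
  exists C : rat,
  forall (d : nat -> nat) (H H' : forall n : nat, {set {set 'I_n}}),
    (forall n, (0 < d n)%N) ->
    (forall n, (r %| n * d n)%N) ->
    (forall n, is_rgraph r (H n)) ->
    (forall n, is_rgraph r (H' n)) ->
    (forall n, [disjoint H n & H' n]) ->
    littleo (fun n => (d n)%:R) (fun n => n%:R ^+ (r - 1)) ->
    littleo (fun n => #|H n|%:R) (fun n => (n * d n)%:R) ->
    littleo (fun n => (maxdeg (H' n))%:R) (fun n => n%:R ^+ (r - 1)) ->
    exists N : nat, forall n : nat, (N <= n)%N ->
      forall e : {set 'I_n}, #|e| = r -> e \notin H n -> e \notin H' n ->
        cond_prob r (d n) (H n) (H' n) e <=
          (r - 1)`!%:R * ((d n)%:R / n%:R ^+ (r - 1)) *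
          (1 + C * (1 / n%:R + (d n)%:R / n%:R ^+ (r - 1)
                    + #|H n|%:R / (n * d n)%:R
                    + (maxdeg (H' n))%:R / n%:R ^+ (r - 1))).
Proof.
case: r => [|m] // m_gt0; rewrite subn1 /=.
set K := switching_const m; have K_gt0 : (0 < K)%N by rewrite addn_gt0 expn_gt0 orbT.
exists (2 * K%:R) => d H H' d_gt0 _ _ _ _ small_d small_H small_H'.
pose eps : rat := (8 * K%:R)^-1.
have eps_gt0 : 0 < eps by rewrite invr_gt0 mulr_gt0 ?ltr0n.
have [N1 le_d] := small_d eps eps_gt0.
have [N2 le_H] := small_H eps eps_gt0.
have [N3 le_H'] := small_H' eps eps_gt0.
exists (N1 + N2 + N3 + 8 * K).+1 => n le_Nn e card_e eNH _.
have n_gt0 : (0 < n)%N by lia.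
have small_error : K%:R * error_term rat m (d n) (H n) (H' n) <= 1 / 2.
  have le_n : 1 / n%:R <= eps.
    by rewrite div1r lef_pV2 ?posrE ?mulr_gt0 ?ltr0n // -(natrM _ 8) ler_nat; lia.
  have n_pos : 0 < n%:R ^+ m :> rat by rewrite exprn_gt0 ?ltr0n.
  have nd_pos : 0 < (n * d n)%N%:R :> rat by rewrite ltr0n muln_gt0 n_gt0 d_gt0.
  have le_dn : (d n)%:R / n%:R ^+ m <= eps by rewrite ler_pdivrMr //; apply: le_d; lia.
  have le_Hn : #|H n|%:R / (n * d n)%N%:R <= eps by rewrite ler_pdivrMr //; apply: le_H; lia.
  have le_H'n : (maxdeg (H' n))%:R / n%:R ^+ m <= eps by rewrite ler_pdivrMr //; apply: le_H'; lia.
  have -> : 1 / 2 = K%:R * (4 * eps) :> rat by rewrite /eps; field; rewrite pnatr_eq0 -lt0n.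
  by rewrite ler_wpM2l ?ler0n // /error_term; lra.
by apply: cond_prob_le.
Qed.
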